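(* Let $k$ be a positive integer and let $a_1,\dots,a_k$ and $b_1,\dots,b_k$ be real numbers in $[a,b]$ such that $\sum_{i=1}^k a_i^j=\sum_{i=1}^k b_i^j$ for all integers $1\le j<k$. Then the following are equivalent: (1) $\sum_{i=1}^k a_i^k\ge\sum_{i=1}^k b_i^k$; (2) $\max_i a_i\ge\max_i b_i$; (3) $\sum_{i=1}^k f(a_i)\ge\sum_{i=1}^k f(b_i)$ for every $k$ times differentiable $f:[a,b]\to\mathbb{R}$ with $f^{(k)}\ge 0$. *)

From Stdlib Require Import Reals.
Open Scope R_scope.

(* Sum over indices 0..k-1 of u i (for k >= 1). *)
Definition sumk (k : nat) (u : nat -> R) : R := sum_f_R0 u (k - 1).

Fixpoint maxR (u : nat -> R) (n : nat) : R :=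
  match n with
  | O => u O
  | S m => Rmax (maxR u m) (u (S m))
  end.

(* l is the derivative of g at x, relative to the interval [a,b]
   (one-sided at the endpoints). *)
Definition deriv_within (a b : R) (g : R -> R) (x l : R) : Prop :=
  limit1_in (fun y => (g y - g x) / (y - x))
            (fun y => a <= y <= b /\ y <> x) l x.

Definition higher_derivs (a b : R) (k : nat) (F : nat -> R -> R) : Prop :=
  forall i, (i < k)%nat -> forall x, a <= x <= b ->
    deriv_within a b (F i) x (F (S i) x).

Definition kdiff_nonneg (a b : R) (k : nat) (f : R -> R) : Prop :=
  exists F : nat -> R -> R,
    F O = f /\ higher_derivs a b k F /\
    (forall x, a <= x <= b -> 0 <= F k x).

(** Let [u, v] be two [k]-point configurations in [[a,b]] with equal power
    sums of orders [1, ..., k-1].  By Newton's identities they then have the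
    same elementary symmetric functions [e_1, ..., e_(k-1)], so their node
    polynomials [P_u(x) = prod (x - u_i)] and [P_v] differ by a constant [c].
    All three conditions of the theorem are equivalent to [c >= 0]:
    - Newton's identity of order [k] gives [p_k(u) - p_k(v) = k c];
    - evaluating [P_v - P_u = c] at the larger of the two maxima compares them;
    - if [c >= 0] then [P_v(u_l) = c >= 0] for all [l]; interpolating [f] at
      the (suitably separated) values of [v] by a polynomial [q] of degree [< k],
      the interpolation error [f - q] has the sign of [f^(k) P_v] (iterated
      Rolle), so [sum f(u) >= sum q(u) = sum q(v) = sum f(v)]; conversely
      [f = x^k] recovers the first condition. *)

From Stdlib Require Import Reals Lra Lia Arith List ClassicalEpsilon.
Import ListNotations.
Open Scope R_scope.

Fixpoint rsum (n : nat) (g : nat -> R) : R :=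
  match n with O => 0 | S m => rsum m g + g m end.

Lemma rsum_S n g : rsum (S n) g = rsum n g + g n.
Proof. reflexivity. Qed.

Lemma rsum_ext n f g : (forall i, (i < n)%nat -> f i = g i) -> rsum n f = rsum n g.
Proof.
  induction n as [|n IH]; intros H; simpl; [reflexivity|].
  rewrite IH by (intros; apply H; lia). rewrite H by lia. reflexivity.
Qed.

Lemma rsum_add n f g : rsum n (fun i => f i + g i) = rsum n f + rsum n g.
Proof. induction n; simpl; [|rewrite IHn]; lra. Qed.

Lemma rsum_scal n c f : rsum n (fun i => c * f i) = c * rsum n f.
Proof. induction n; simpl; [|rewrite IHn]; lra. Qed.

Lemma rsum_opp n f : rsum n (fun i => - f i) = - rsum n f.
Proof. induction n; simpl; [|rewrite IHn]; lra. Qed.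

Lemma rsum_sub n f g : rsum n (fun i => f i - g i) = rsum n f - rsum n g.
Proof. induction n; simpl; [|rewrite IHn]; lra. Qed.

Lemma rsum_zero n f : (forall i, (i < n)%nat -> f i = 0) -> rsum n f = 0.
Proof.
  intros H. rewrite (rsum_ext n f (fun _ => 0)) by auto.
  clear H. induction n; simpl; lra.
Qed.

Lemma rsum_nonneg n f : (forall i, (i < n)%nat -> 0 <= f i) -> 0 <= rsum n f.
Proof.
  induction n; simpl; intros H; [lra|].
  assert (0 <= rsum n f) by (apply IHn; intros; apply H; lia).
  specialize (H n ltac:(lia)). lra.
Qed.

Lemma rsum_shift n f : rsum (S n) f = f O + rsum n (fun i => f (S i)).
Proof. induction n; simpl in *; [|rewrite IHn]; lra. Qed.

Lemma rsum_swap n m (f : nat -> nat -> R) :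
  rsum n (fun i => rsum m (fun j => f i j)) = rsum m (fun j => rsum n (fun i => f i j)).
Proof.
  induction n; simpl.
  - symmetry. apply rsum_zero. reflexivity.
  - rewrite IHn, <- rsum_add. reflexivity.
Qed.

Lemma sumk_rsum k g : (1 <= k)%nat -> sumk k g = rsum k g.
Proof.
  intros Hk. unfold sumk. replace k with (S (k - 1)) at 2 by lia.
  generalize (k - 1)%nat. clear. induction n; simpl in *; [lra|].
  rewrite IHn. reflexivity.
Qed.

(** * Newton's identities

    [esym u n j] is the [j]-th elementary symmetric function of
    [u 0, ..., u (n-1)] and [psum u n m] the [m]-th power sum; [sg l] is the
    sign [(-1)^l]. *)

Fixpoint esym (u : nat -> R) (n j : nat) : R :=
  match n, j with
  | O, O => 1
  | O, S _ => 0
  | S _, O => 1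
  | S n', S j' => esym u n' (S j') + u n' * esym u n' j'
  end.

Definition psum (u : nat -> R) (n m : nat) : R := rsum n (fun i => u i ^ m).

Definition sg (l : nat) : R := (-1) ^ l.

Lemma sg_S l : sg (S l) = - sg l.
Proof. unfold sg; simpl; ring. Qed.

Lemma sg_sq l : sg l * sg l = 1.
Proof. induction l; [unfold sg; simpl; ring|]. rewrite sg_S. nra. Qed.

Lemma esym_0 u n : esym u n 0 = 1.
Proof. destruct n; reflexivity. Qed.

Lemma esym_big u n j : (n < j)%nat -> esym u n j = 0.
Proof.
  revert j; induction n; intros j H; destruct j; simpl; try lia; try reflexivity.
  rewrite !IHn by lia. ring.
Qed.

Definition esym_pred (u : nat -> R) (n l : nat) : R :=
  match l with O => 0 | S l' => esym u n l' end.

Lemma esym_S u n l : esym u (S n) l = esym u n l + u n * esym_pred u n l.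
Proof. destruct l; simpl; [rewrite esym_0|]; ring. Qed.

(** Newton's identity of order [j+1]:
    [sum_(l<=j) (-1)^l e_l p_(j+1-l) + (-1)^(j+1) (j+1) e_(j+1) = 0]. *)
Definition newton_sum (u : nat -> R) (n j : nat) : R :=
  rsum (S j) (fun l => sg l * esym u n l * psum u n (S j - l))
  + sg (S j) * INR (S j) * esym u n (S j).

(** The telescoping sum produced by the new variable [x] in the induction step. *)
Lemma newton_telescope u n j x :
  x * rsum (S j) (fun l => sg l * esym_pred u n l * x ^ (S j - l)) =
  sg j * esym u n j * x - rsum (S j) (fun l => sg l * esym u n l * x ^ (S j - l)).
Proof.
  rewrite rsum_shift, rsum_S. simpl esym_pred. cbv beta.
  replace (rsum j (fun i => sg (S i) * esym u n i * x ^ (S j - S i))) with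
    (- rsum j (fun i => sg i * esym u n i * x ^ (j - i))).
  2:{ rewrite <- rsum_opp. apply rsum_ext. intros i _. rewrite sg_S. simpl. ring. }
  replace (rsum j (fun l => sg l * esym u n l * x ^ (S j - l))) with
    (x * rsum j (fun i => sg i * esym u n i * x ^ (j - i))).
  2:{ rewrite <- rsum_scal. apply rsum_ext. intros i Hi.
      replace (S j - i)%nat with (S (j - i)) by lia. simpl. ring. }
  replace (S j - j)%nat with 1%nat by lia. replace (S j - 0)%nat with (S j) by lia.
  simpl. ring.
Qed.

Lemma newton_shifted u n j : (forall i, newton_sum u n i = 0) ->
  rsum (S j) (fun l => sg l * esym_pred u n l * psum u n (S j - l)) =
  sg j * INR j * esym u n j.
Proof.
  intros Hnewton. rewrite rsum_shift. simpl esym_pred. cbv beta.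
  destruct j as [|j]; [simpl; ring|].
  replace (rsum (S j) (fun i => sg (S i) * esym u n i * psum u n (S (S j) - S i))) with
    (- rsum (S j) (fun i => sg i * esym u n i * psum u n (S j - i))).
  2:{ rewrite <- rsum_opp. apply rsum_ext. intros i _. rewrite sg_S. simpl. ring. }
  pose proof (Hnewton j) as H. unfold newton_sum in H. rewrite sg_S in *. lra.
Qed.

Theorem newton_identity u n j : newton_sum u n j = 0.
Proof.
  revert j; induction n as [|n IHn]; intros j.
  - unfold newton_sum. rewrite rsum_shift, rsum_zero by (intros; simpl; ring).
    unfold psum. simpl. ring.
  - unfold newton_sum. set (x := u n).
    (* Expand e_l and p_m of the n+1 variables in terms of those of n variables. *)
    transitivity
      (newton_sum u n j
       + (rsum (S j) (fun l => sg l * esym u n l * x ^ (S j - l))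
          + x * rsum (S j) (fun l => sg l * esym_pred u n l * x ^ (S j - l)))
       + x * rsum (S j) (fun l => sg l * esym_pred u n l * psum u n (S j - l))
       + sg (S j) * INR (S j) * x * esym u n j).
    + unfold newton_sum. rewrite <- !rsum_scal, <- !rsum_add.
      rewrite (esym_S u n (S j)). simpl esym_pred. fold x.
      replace (rsum (S j) (fun l => sg l * esym u (S n) l * psum u (S n) (S j - l))) with
        (rsum (S j) (fun i => sg i * esym u n i * psum u n (S j - i) +
           (sg i * esym u n i * x ^ (S j - i) + x * (sg i * esym_pred u n i * x ^ (S j - i))) +
           x * (sg i * esym_pred u n i * psum u n (S j - i)))).
      * rewrite !rsum_add. ring.
      * apply rsum_ext. intros i _. rewrite esym_S.
        change (psum u (S n) (S j - i)) with (psum u n (S j - i) + x ^ (S j - i)). unfold x. ring.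
    + rewrite newton_telescope, newton_shifted by exact IHn.
      rewrite IHn, sg_S, S_INR. ring.
Qed.

(** * The node polynomial [node_poly w n x = (x - w 0) ... (x - w (n-1))] *)

Fixpoint node_poly (w : nat -> R) (n : nat) (x : R) : R :=
  match n with O => 1 | S m => node_poly w m x * (x - w m) end.

Lemma node_poly_expand w n x :
  node_poly w n x = rsum (S n) (fun j => sg j * esym w n j * x ^ (n - j)).
Proof.
  induction n as [|n IHn]; [simpl; unfold sg; simpl; ring|].
  simpl node_poly. rewrite IHn.
  rewrite (rsum_ext (S (S n)) _ (fun j => sg j * esym w n j * x ^ (S n - j)
                                   + w n * (sg j * esym_pred w n j * x ^ (S n - j))))
    by (intros; rewrite esym_S; ring).
  rewrite rsum_add, rsum_scal.
  (* top coefficient of the old part vanishes; the old part gets multiplied by x *)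
  rewrite (rsum_S (S n) (fun j => sg j * esym w n j * x ^ (S n - j))), esym_big by lia.
  rewrite (rsum_ext (S n) (fun j => sg j * esym w n j * x ^ (S n - j))
                          (fun j => x * (sg j * esym w n j * x ^ (n - j)))).
  2:{ intros i Hi. replace (S n - i)%nat with (S (n - i)) by lia. simpl. ring. }
  (* the new part is the old sum shifted by one index, with a sign change *)
  rewrite (rsum_shift (S n) (fun j => sg j * esym_pred w n j * x ^ (S n - j))). simpl esym_pred.
  rewrite (rsum_ext (S n) (fun i => sg (S i) * esym w n i * x ^ (S n - S i))
                          (fun j => - (sg j * esym w n j * x ^ (n - j)))).
  2:{ intros i _. rewrite sg_S. simpl. ring. }
  rewrite rsum_scal, rsum_opp. ring.
Qed.

Lemma node_poly_root w n i : (i < n)%nat -> node_poly w n (w i) = 0.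
Proof.
  induction n; intros H; simpl; [lia|].
  destruct (Nat.eq_dec i n) as [->|]; [ring|]. rewrite IHn by lia. ring.
Qed.

Lemma node_poly_neq0 w n y : (forall i, (i < n)%nat -> w i <> y) -> node_poly w n y <> 0.
Proof.
  induction n; intros H; simpl; [lra|]. apply Rmult_integral_contrapositive. split.
  - apply IHn; intros; apply H; lia.
  - specialize (H n ltac:(lia)). lra.
Qed.

Lemma node_poly_nonneg w n x : (forall i, (i < n)%nat -> w i <= x) -> 0 <= node_poly w n x.
Proof.
  induction n; intros H; simpl; [lra|]. apply Rmult_le_pos.
  - apply IHn; intros; apply H; lia.
  - specialize (H n ltac:(lia)). lra.
Qed.

Lemma node_poly_pos w n x : (forall i, (i < n)%nat -> w i < x) -> 0 < node_poly w n x.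
Proof.
  induction n; intros H; simpl; [lra|]. apply Rmult_lt_0_compat.
  - apply IHn; intros; apply H; lia.
  - specialize (H n ltac:(lia)). lra.
Qed.

Lemma node_poly_same_sign w v n x :
  (forall i, (i < n)%nat -> 0 < (x - w i) * (x - v i)) ->
  0 < node_poly w n x * node_poly v n x.
Proof.
  induction n; intros H; simpl; [lra|].
  specialize (IHn (fun i Hi => H i ltac:(lia))). specialize (H n ltac:(lia)).
  replace (node_poly w n x * (x - w n) * (node_poly v n x * (x - v n)))
    with ((node_poly w n x * node_poly v n x) * ((x - w n) * (x - v n))) by ring.
  apply Rmult_lt_0_compat; auto.
Qed.

Section EqualPowerSums.

Variables (u v : nat -> R) (k : nat).
Hypothesis hpow : forall m, (1 <= m)%nat -> (m < k)%nat -> psum u k m = psum v k m.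

(** Newton's identities determine [e_1, ..., e_(k-1)] from [p_1, ..., p_(k-1)]. *)
Lemma esym_eq_of_psum_eq j : (j < k)%nat -> esym u k j = esym v k j.
Proof.
  induction j as [j IH] using lt_wf_ind. intros Hj.
  destruct j as [|j]; [rewrite !esym_0; reflexivity|].
  pose proof (newton_identity u k j) as Hu. pose proof (newton_identity v k j) as Hv.
  unfold newton_sum in Hu, Hv.
  rewrite (rsum_ext (S j) _ (fun l => sg l * esym v k l * psum v k (S j - l))) in Hu
    by (intros i Hi; rewrite IH, hpow by lia; reflexivity).
  assert (H : sg (S j) * INR (S j) * (esym u k (S j) - esym v k (S j)) = 0) by lra.
  assert (Hs : sg (S j) * INR (S j) <> 0).
  { apply Rmult_integral_contrapositive. split.
    - unfold sg. apply pow_nonzero. lra.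
    - apply not_0_INR. lia. }
  apply Rmult_integral in H as [H|H]; [contradiction|lra].
Qed.

(** The constant by which the two node polynomials differ. *)
Definition node_gap : R := sg k * (esym v k k - esym u k k).

Lemma node_poly_diff x : node_poly v k x - node_poly u k x = node_gap.
Proof.
  rewrite !node_poly_expand, <- rsum_sub, rsum_S, rsum_zero.
  - replace (k - k)%nat with O by lia. unfold node_gap. simpl. ring.
  - intros i Hi. rewrite esym_eq_of_psum_eq by exact Hi. ring.
Qed.

(** Newton's identity of order [k] then gives [p_k(u) - p_k(v) = k * node_gap]. *)
Lemma psum_top_diff : (1 <= k)%nat -> psum u k k - psum v k k = INR k * node_gap.
Proof.
  intros Hk. unfold node_gap.
  pose proof (newton_identity u k (k - 1)) as Hu.
  pose proof (newton_identity v k (k - 1)) as Hv. unfold newton_sum in Hu, Hv.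
  rewrite rsum_shift in Hu, Hv. cbv beta in Hu, Hv.
  rewrite (rsum_ext (k - 1) _ (fun i => sg (S i) * esym v k (S i) * psum v k (S (k - 1) - S i)))
    in Hu by (intros i Hi; rewrite esym_eq_of_psum_eq, hpow by lia; reflexivity).
  replace (S (k - 1)) with k in Hu, Hv by lia.
  rewrite !esym_0, Nat.sub_0_r in Hu, Hv.
  replace (sg 0) with 1 in Hu, Hv by reflexivity.
  pose proof (sg_sq k). nra.
Qed.

Lemma psum_top_ge_iff : (1 <= k)%nat -> psum u k k >= psum v k k <-> 0 <= node_gap.
Proof.
  intros Hk. pose proof (psum_top_diff Hk). assert (0 < INR k) by (apply lt_0_INR; lia).
  split; intros H'; nra.
Qed.

End EqualPowerSums.

(** * One-sided derivatives on [[a,b]] and Rolle's theorem *)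

Lemma deriv_within_of_derivable a b g x l :
  derivable_pt_lim g x l -> deriv_within a b g x l.
Proof.
  intros H eps Heps. destruct (H eps Heps) as [d Hd].
  exists d. split; [apply cond_pos|].
  intros y [[_ Hne] Hdist]. simpl in *. unfold R_dist in *.
  specialize (Hd (y - x) ltac:(lra) Hdist). replace (x + (y - x)) with y in Hd by ring.
  exact Hd.
Qed.

Lemma deriv_within_sub a b f g x l l' : deriv_within a b f x l -> deriv_within a b g x l' ->
  deriv_within a b (fun y => f y - g y) x (l - l').
Proof.
  intros Hf Hg eps Heps.
  destruct (limit_minus _ _ _ _ _ _ Hf Hg eps Heps) as [alp [Ha Hd]].
  exists alp. split; [exact Ha|]. intros y Hy.
  specialize (Hd y Hy). simpl in *. unfold R_dist in *.
  replace ((f y - g y - (f x - g x)) / (y - x))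
    with ((f y - f x) / (y - x) - (g y - g x) / (y - x)) by (unfold Rdiv; ring).
  exact Hd.
Qed.

Lemma derivable_of_deriv_within a b g x l :
  a < x < b -> deriv_within a b g x l -> derivable_pt_lim g x l.
Proof.
  intros Hx H eps Heps. destruct (H eps Heps) as [alp [Ha Hd]].
  set (r := Rmin alp (Rmin (x - a) (b - x))).
  assert (Hr : 0 < r) by (unfold r; repeat apply Rmin_pos; lra).
  exists (mkposreal r Hr). intros h Hh Hlt. simpl in Hlt.
  assert (Hrs : r <= alp /\ r <= x - a /\ r <= b - x).
  { unfold r. pose proof (Rmin_l alp (Rmin (x - a) (b - x))).
    pose proof (Rmin_r alp (Rmin (x - a) (b - x))).
    pose proof (Rmin_l (x - a) (b - x)). pose proof (Rmin_r (x - a) (b - x)). lra. }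
  apply Rabs_def2 in Hlt as Hh2.
  specialize (Hd (x + h)). simpl in Hd. unfold R_dist in Hd.
  replace (x + h - x) with h in Hd by ring. apply Hd. lra.
Qed.

Lemma deriv_within_continuous a b g x l : deriv_within a b g x l ->
  forall eps, 0 < eps -> exists d, 0 < d /\
    forall y, a <= y <= b -> Rabs (y - x) < d -> Rabs (g y - g x) < eps.
Proof.
  intros H eps Heps. destruct (H 1 Rlt_0_1) as [alp [Ha Hd]].
  pose proof (Rabs_pos l).
  set (r := Rmin alp (eps / (Rabs l + 1))).
  assert (Hr1 : r <= alp) by apply Rmin_l.
  assert (Hr2 : r <= eps / (Rabs l + 1)) by apply Rmin_r.
  exists r. split; [apply Rmin_pos; [lra|apply Rdiv_lt_0_compat; lra]|].
  intros y Hy Hyx. destruct (Req_dec y x) as [->|Hne].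
  { replace (g x - g x) with 0 by ring. rewrite Rabs_R0. lra. }
  assert (Hq : Rabs ((g y - g x) / (y - x)) <= Rabs l + 1).
  { assert (Rabs ((g y - g x) / (y - x) - l) < 1)
      by (apply (Hd y); simpl; unfold R_dist; split; [split|]; auto; lra).
    pose proof (Rabs_triang_inv ((g y - g x) / (y - x)) l). lra. }
  replace (g y - g x) with (((g y - g x) / (y - x)) * (y - x)) by (field; lra).
  rewrite Rabs_mult. pose proof (Rabs_pos (y - x)).
  apply Rle_lt_trans with ((Rabs l + 1) * Rabs (y - x)); [apply Rmult_le_compat_r; lra|].
  replace eps with ((Rabs l + 1) * (eps / (Rabs l + 1))) by (field; lra).
  apply Rmult_lt_compat_l; lra.
Qed.

Definition clamp (al be y : R) : R := Rmin be (Rmax al y).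

Lemma clamp_lip al be s t : al <= be -> Rabs (clamp al be s - clamp al be t) <= Rabs (s - t).
Proof.
  intros H. unfold clamp, Rmin, Rmax.
  repeat destruct Rle_dec; unfold Rabs; repeat destruct Rcase_abs; lra.
Qed.

Lemma clamp_in al be s : al <= be -> al <= clamp al be s <= be.
Proof. intros H. unfold clamp, Rmin, Rmax. repeat destruct Rle_dec; lra. Qed.

Lemma clamp_id al be s : al <= s <= be -> clamp al be s = s.
Proof. intros H. unfold clamp, Rmin, Rmax. repeat destruct Rle_dec; lra. Qed.

(** Stdlib's [Rolle] is applied to [g]
    composed with the clamp onto [[al,be]], which is continuous everywhere. *)
Lemma rolle_within a b g g' al be : a <= al -> al < be -> be <= b ->
  (forall x, a <= x <= b -> deriv_within a b g x (g' x)) -> g al = 0 -> g be = 0 ->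
  exists r, al < r < be /\ g' r = 0.
Proof.
  intros H1 H2 H3 Hd Ha Hb.
  set (gc := fun y => g (clamp al be y)).
  assert (Hder : forall x, al < x < be -> derivable_pt_lim gc x (g' x)).
  { intros x Hx eps Heps.
    destruct (derivable_of_deriv_within a b g x (g' x) ltac:(lra) (Hd x ltac:(lra)) eps Heps)
      as [d Hdd].
    set (r := Rmin d (Rmin (x - al) (be - x))).
    assert (Hr : 0 < r) by (unfold r; repeat apply Rmin_pos; try apply cond_pos; lra).
    exists (mkposreal r Hr). intros h Hh Hlt. simpl in Hlt.
    assert (Hrs : r <= d /\ r <= x - al /\ r <= be - x).
    { unfold r. pose proof (Rmin_l d (Rmin (x - al) (be - x))).
      pose proof (Rmin_r d (Rmin (x - al) (be - x))).
      pose proof (Rmin_l (x - al) (be - x)). pose proof (Rmin_r (x - al) (be - x)). lra. }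
    apply Rabs_def2 in Hlt as Hh2. unfold gc.
    rewrite !clamp_id by lra. apply Hdd; auto. lra. }
  assert (Hc : forall x, al <= x <= be -> continuity_pt gc x).
  { intros x Hx eps Heps.
    destruct (deriv_within_continuous a b g x (g' x) (Hd x ltac:(lra)) eps Heps)
      as [d [Hdp Hdd]].
    exists d. split; [lra|]. intros y [_ Hy]. simpl in *. unfold R_dist in *. unfold gc.
    pose proof (clamp_lip al be y x ltac:(lra)). pose proof (clamp_in al be y ltac:(lra)).
    rewrite (clamp_id al be x) in * by lra. apply Hdd; lra. }
  assert (Heq : gc al = gc be) by (unfold gc; rewrite !clamp_id, Ha, Hb by lra; reflexivity).
  set (pr := fun x (Hx : al < x < be) =>
               exist (fun l => derivable_pt_lim gc x l) (g' x) (Hder x Hx)).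
  destruct (Rolle gc al be pr Hc H2 Heq) as [c [P Hc0]].
  exists c. split; auto.
Qed.

Lemma list_min (l : list R) : l <> [] -> exists m, In m l /\ forall x, In x l -> m <= x.
Proof.
  induction l as [|y l IH]; intros H; [congruence|].
  destruct l as [|z l].
  - exists y. split; [left; auto|]. intros x [->|[]]. lra.
  - destruct IH as [m [Hm Hm2]]; [congruence|].
    exists (Rmin y m). split.
    + unfold Rmin; destruct Rle_dec; [left|right]; auto.
    + intros x [->|Hx]; [apply Rmin_l|]. pose proof (Rmin_r y m). specialize (Hm2 x Hx). lra.
Qed.

(** Remove the least zero
    [al], recurse on the rest, and add a zero of [g'] between [al] and the next
    zero; it lies below all the recursively found ones. *)
Lemma rolle_zeros_step a b : forall m (l : list R) g g',
  (forall x, a <= x <= b -> deriv_within a b g x (g' x)) ->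
  NoDup l -> length l = S m -> (forall x, In x l -> a <= x <= b /\ g x = 0) ->
  exists l', NoDup l' /\ length l' = m /\
    (forall y, In y l' -> a <= y <= b /\ g' y = 0) /\
    (forall y, In y l' -> exists x, In x l /\ x < y).
Proof.
  induction m as [|m IHm]; intros l g g' Hd Hn Hlen Hz.
  { exists []. repeat split; try constructor; simpl; tauto. }
  destruct (list_min l) as [al [Hal Hmin]]; [intros ->; simpl in Hlen; lia|].
  destruct (in_split al l Hal) as [l1 [l2 ->]].
  set (L := l1 ++ l2).
  assert (HnL : NoDup L) by apply (NoDup_remove_1 l1 l2 al Hn).
  assert (HaL : ~ In al L) by apply (NoDup_remove_2 l1 l2 al Hn).
  assert (HinL : forall x, In x L -> In x (l1 ++ al :: l2)).
  { intros x Hx. apply in_app_or in Hx. apply in_or_app. destruct Hx; [left|right; right]; auto. }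
  assert (Hgt : forall x, In x L -> al < x).
  { intros x Hx. assert (al <= x) by (apply Hmin, HinL, Hx).
    destruct (Req_dec al x) as [<-|]; [contradiction|lra]. }
  assert (HlenL : length L = S m) by (unfold L; rewrite length_app in *; simpl in Hlen; lia).
  destruct (IHm L g g' Hd HnL HlenL (fun x Hx => Hz x (HinL x Hx)))
    as [L' [HnL' [HlL' [HzL' HwL']]]].
  destruct (list_min L) as [be [Hbe Hbmin]]; [intros E; rewrite E in HlenL; discriminate|].
  assert (Hab : al < be) by (apply Hgt; auto).
  destruct (Hz al Hal) as [Hal1 Hal2]. destruct (Hz be (HinL be Hbe)) as [Hbe1 Hbe2].
  destruct (rolle_within a b g g' al be ltac:(lra) Hab ltac:(lra) Hd Hal2 Hbe2) as [r [Hr1 Hr2]].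
  exists (r :: L'). split; [|split; [|split]].
  - constructor; auto. intros Hr. destruct (HwL' r Hr) as [x [Hx Hxr]].
    specialize (Hbmin x Hx). lra.
  - simpl. lia.
  - intros y [<-|Hy]; [lra|auto].
  - intros y [<-|Hy].
    + exists al. split; [auto|lra].
    + destruct (HwL' y Hy) as [x [Hx Hxy]]. exists x. split; auto.
Qed.

Lemma iterated_rolle a b : forall n (G : nat -> R -> R) (l : list R),
  higher_derivs a b n G ->
  NoDup l -> length l = S n -> (forall x, In x l -> a <= x <= b /\ G O x = 0) ->
  exists xi, a <= xi <= b /\ G n xi = 0.
Proof.
  induction n as [|n IHn]; intros G l Hd Hn Hlen Hz.
  - destruct l as [|x l]; simpl in Hlen; [lia|]. exists x. apply Hz. left; auto.
  - destruct (rolle_zeros_step a b (S n) l (G O) (G 1%nat) (Hd O ltac:(lia)) Hn Hlen Hz)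
      as [l' [Hn' [Hl' [Hz' _]]]].
    apply (IHn (fun i => G (S i)) l'); auto.
    intros i Hi. apply Hd. lia.
Qed.

Definition poly_eval (n : nat) (c : nat -> R) (x : R) : R := rsum (S n) (fun j => c j * x ^ j).

Definition is_poly (n : nat) (p : R -> R) (l : R) : Prop :=
  exists c, c n = l /\ forall x, p x = poly_eval n c x.

Lemma is_poly_ext n p r l : (forall x, p x = r x) -> is_poly n p l -> is_poly n r l.
Proof. intros E [c [H1 H2]]. exists c. split; auto. intros x. rewrite <- E. auto. Qed.

Lemma is_poly_const r : is_poly 0 (fun _ => r) r.
Proof. exists (fun _ => r). split; auto. intros x. unfold poly_eval. simpl. ring. Qed.

Lemma is_poly_raise n p l : is_poly n p l -> is_poly (S n) p 0.
Proof.
  intros [c [H1 H2]]. exists (fun j => if Nat.eqb j (S n) then 0 else c j). split.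
  - rewrite Nat.eqb_refl. auto.
  - intros x. rewrite H2. unfold poly_eval. rewrite (rsum_S (S n)), Nat.eqb_refl.
    rewrite Rmult_0_l, Rplus_0_r. apply rsum_ext. intros i Hi.
    destruct (Nat.eqb_spec i (S n)); [lia|auto].
Qed.

Lemma is_poly_comb n p r l l' mu :
  is_poly n p l -> is_poly n r l' -> is_poly n (fun x => p x + mu * r x) (l + mu * l').
Proof.
  intros [c [H1 H2]] [d [H3 H4]]. exists (fun j => c j + mu * d j). split.
  - rewrite H1, H3. auto.
  - intros x. rewrite H2, H4. unfold poly_eval. rewrite <- rsum_scal, <- rsum_add.
    apply rsum_ext. intros; ring.
Qed.

Lemma is_poly_mul_linear n p l w : is_poly n p l -> is_poly (S n) (fun x => (x - w) * p x) l.
Proof.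
  intros [c [H1 H2]].
  set (c0 := fun j => if Nat.leb j n then c j else 0).
  assert (Hc : forall j, (j < S n)%nat -> c0 j = c j).
  { intros j Hj. unfold c0. destruct (Nat.leb_spec j n); [auto|lia]. }
  assert (Hc0 : c0 (S n) = 0) by (unfold c0; destruct (Nat.leb_spec (S n) n); [lia|auto]).
  set (sh := fun j => match j with O => 0 | S j' => c0 j' end).
  exists (fun j => sh j - w * c0 j). split.
  - unfold sh. rewrite Hc0, Hc, H1 by lia. ring.
  - intros x. rewrite H2. unfold poly_eval.
    rewrite (rsum_ext (S (S n)) _ (fun j => sh j * x ^ j + (- w) * (c0 j * x ^ j)))
      by (intros; ring).
    rewrite rsum_add, rsum_scal.
    rewrite (rsum_shift (S n) (fun j => sh j * x ^ j)), (rsum_S (S n) (fun j => c0 j * x ^ j)).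
    unfold sh. rewrite Hc0.
    rewrite (rsum_ext (S n) (fun i => c0 i * x ^ S i) (fun j => x * (c j * x ^ j)))
      by (intros j Hj; rewrite Hc by auto; simpl; ring).
    rewrite rsum_scal.
    rewrite (rsum_ext (S n) (fun j => c0 j * x ^ j) (fun j => c j * x ^ j))
      by (intros j Hj; rewrite Hc; auto).
    ring.
Qed.

Lemma node_poly_is_poly w n : is_poly n (node_poly w n) 1.
Proof.
  induction n as [|n IHn].
  - apply (is_poly_ext 0 (fun _ => 1)); [reflexivity|apply is_poly_const].
  - apply (is_poly_ext (S n) (fun x => (x - w n) * node_poly w n x)); [intros; simpl; ring|].
    apply is_poly_mul_linear. exact IHn.
Qed.

Lemma is_poly_pow k : is_poly k (fun x => x ^ k) 1.
Proof.
  exists (fun j => if Nat.eqb j k then 1 else 0). split; [rewrite Nat.eqb_refl; auto|].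
  intros x. unfold poly_eval. rewrite rsum_S, Nat.eqb_refl, rsum_zero; [ring|].
  intros i Hi. destruct (Nat.eqb_spec i k); [lia|ring].
Qed.

Lemma derivable_pt_lim_ext f g x l :
  (forall y, f y = g y) -> derivable_pt_lim f x l -> derivable_pt_lim g x l.
Proof.
  intros E H eps Heps. destruct (H eps Heps) as [d Hd].
  exists d. intros h Hh Hl. rewrite <- !E. auto.
Qed.

Lemma rsum_pow_deriv N c x :
  derivable_pt_lim (fun y => rsum N (fun j => c j * y ^ j)) x
                   (rsum N (fun j => c j * (INR j * x ^ pred j))).
Proof.
  induction N as [|N IHN].
  - apply (derivable_pt_lim_ext (fct_cte 0)); [reflexivity|apply derivable_pt_lim_const].
  - apply (derivable_pt_lim_ext
             (plus_fct (fun y => rsum N (fun j => c j * y ^ j))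
                       (mult_real_fct (c N) (fun y => y ^ N)))); [reflexivity|].
    apply derivable_pt_lim_plus; auto.
    apply derivable_pt_lim_scal, derivable_pt_lim_pow.
Qed.

Lemma poly_eval_deriv n c x :
  derivable_pt_lim (poly_eval (S n) c) x (poly_eval n (fun j => c (S j) * INR (S j)) x).
Proof.
  unfold poly_eval. pose proof (rsum_pow_deriv (S (S n)) c x) as H.
  rewrite rsum_shift, INR_0, Rmult_0_l, Rmult_0_r, Rplus_0_l in H.
  erewrite rsum_ext; [exact H|]. intros; cbn [Nat.pred]; ring.
Qed.

Lemma poly_higher_derivs a b n : forall p l, is_poly n p l ->
  exists D : nat -> R -> R,
    D O = p /\ higher_derivs a b n D /\ forall x, D n x = INR (fact n) * l.
Proof.
  induction n as [|n IHn]; intros p l [c [H1 H2]].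
  - exists (fun _ => p). split; [auto|split; [intros i Hi; lia|]].
    intros x. rewrite H2. unfold poly_eval. simpl. rewrite H1. ring.
  - destruct (IHn (poly_eval n (fun j => c (S j) * INR (S j))) (l * INR (S n)))
      as [D' [E0 [Ed En]]]; [exists (fun j => c (S j) * INR (S j)); rewrite H1; auto|].
    exists (fun i => match i with O => p | S i' => D' i' end). split; [auto|split].
    + intros [|i] Hi x Hx; [|apply Ed; auto; lia].
      rewrite E0. apply deriv_within_of_derivable.
      apply (derivable_pt_lim_ext (poly_eval (S n) c)); [intros; rewrite H2; auto|].
      apply poly_eval_deriv.
    + intros x. rewrite En, fact_simpl, mult_INR. ring.
Qed.

Lemma poly_sum_eq u v k q :
  (forall m, (1 <= m)%nat -> (m < k)%nat -> psum u k m = psum v k m) ->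
  is_poly k q 0 -> rsum k (fun i => q (u i)) = rsum k (fun i => q (v i)).
Proof.
  intros Hp [c [H1 H2]].
  assert (E : forall w, rsum k (fun i => q (w i)) = rsum k (fun j => c j * psum w k j)).
  { intros w. rewrite (rsum_ext k _ (fun i => rsum k (fun j => c j * w i ^ j))).
    - rewrite rsum_swap. apply rsum_ext. intros j _. unfold psum. rewrite <- rsum_scal.
      reflexivity.
    - intros i _. rewrite H2. unfold poly_eval. rewrite rsum_S, H1. ring. }
  rewrite !E. apply rsum_ext. intros [|j] Hj; [reflexivity|]. rewrite Hp by lia. reflexivity.
Qed.

(** Lagrange interpolation at [n] distinct nodes by a polynomial of degree [< n],
    built Newton-style one node at a time. *)
Lemma interpolation (w : nat -> R) (f : R -> R) n :
  (forall i j, (i < n)%nat -> (j < n)%nat -> i <> j -> w i <> w j) ->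
  exists q, is_poly n q 0 /\ forall i, (i < n)%nat -> q (w i) = f (w i).
Proof.
  induction n as [|n IHn]; intros Hd.
  { exists (fun _ => 0). split; [apply is_poly_const|intros; lia]. }
  destruct IHn as [q' [Hq' Hi']]; [intros i j Hi Hj Hij; apply Hd; auto; lia|].
  assert (Hnz : node_poly w n (w n) <> 0) by (apply node_poly_neq0; intros i Hi; apply Hd; lia).
  set (al := (f (w n) - q' (w n)) / node_poly w n (w n)).
  exists (fun x => q' x + al * node_poly w n x). split.
  - eapply is_poly_raise, is_poly_comb; [exact Hq'|apply node_poly_is_poly].
  - intros i Hi. destruct (Nat.eq_dec i n) as [->|Hne].
    + unfold al. field. auto.
    + rewrite node_poly_root, Hi' by lia. ring.
Qed.

Lemma NoDup_nodes (w : nat -> R) k :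
  (forall i j, (i < k)%nat -> (j < k)%nat -> i <> j -> w i <> w j) -> NoDup (map w (seq 0 k)).
Proof.
  intros Hd. apply NoDup_map_NoDup_ForallPairs; [|apply seq_NoDup].
  intros i j Hi Hj E. apply in_seq in Hi, Hj.
  destruct (Nat.eq_dec i j); auto. exfalso. apply (Hd i j); auto; lia.
Qed.

(** If [q] (degree [< k]) interpolates [F 0] at [k] distinct nodes [w] and
    [F k >= 0], then [F 0 - q = lam * node_poly w k] at any further point, with
    [lam >= 0]: choosing [lam] to make [F 0 - q - lam * node_poly w k] vanish at
    [x] too, it has [k+1] zeros, so by iterated Rolle its [k]-th derivative
    [F k - k! lam] vanishes somewhere in [[a,b]]. *)
Lemma interpolation_error a b k (F : nat -> R -> R) (w : nat -> R) q x :
  higher_derivs a b k F -> (forall y, a <= y <= b -> 0 <= F k y) ->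
  (forall i j, (i < k)%nat -> (j < k)%nat -> i <> j -> w i <> w j) ->
  (forall i, (i < k)%nat -> a <= w i <= b) ->
  is_poly k q 0 -> (forall i, (i < k)%nat -> q (w i) = F O (w i)) ->
  a <= x <= b -> (forall i, (i < k)%nat -> w i <> x) ->
  exists lam, 0 <= lam /\ F O x - q x = lam * node_poly w k x.
Proof.
  intros Hh Hpos Hd Hw Hq Hqi Hx Hxn.
  assert (Hnz : node_poly w k x <> 0) by (apply node_poly_neq0; auto).
  set (lam := (F O x - q x) / node_poly w k x).
  exists lam. split; [|unfold lam; field; auto].
  destruct (poly_higher_derivs a b k (fun y => q y + lam * node_poly w k y) (0 + lam * 1))
    as [D [E0 [Ed En]]]; [apply is_poly_comb; [auto|apply node_poly_is_poly]|].
  assert (HH : higher_derivs a b k (fun i y => F i y - D i y))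
    by (intros i Hi y Hy; apply deriv_within_sub; [apply Hh|apply Ed]; auto).
  destruct (iterated_rolle a b k _ (x :: map w (seq 0 k)) HH) as [xi [Hxi Hxi0]].
  - constructor; [|apply NoDup_nodes; auto].
    intros Hin. apply in_map_iff in Hin as [i [Ei Hi]]. apply in_seq in Hi.
    apply (Hxn i); [lia|auto].
  - simpl. rewrite length_map, length_seq. reflexivity.
  - intros y [<-|Hy].
    + split; auto. rewrite E0. unfold lam. field. auto.
    + apply in_map_iff in Hy as [i [<- Hi]]. apply in_seq in Hi. split; [apply Hw; lia|].
      rewrite E0, node_poly_root, Hqi by lia. ring.
  - (* [F k xi = k! lam] and [F k xi >= 0] *)
    rewrite En in Hxi0. specialize (Hpos xi Hxi).
    assert (Hf : 0 < INR (fact k)) by apply (lt_0_INR _ (lt_O_fact k)).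
    nra.
Qed.

Lemma interpolant_below a b k (F : nat -> R -> R) (w : nat -> R) q x :
  higher_derivs a b k F -> (forall y, a <= y <= b -> 0 <= F k y) ->
  (forall i j, (i < k)%nat -> (j < k)%nat -> i <> j -> w i <> w j) ->
  (forall i, (i < k)%nat -> a <= w i <= b) ->
  is_poly k q 0 -> (forall i, (i < k)%nat -> q (w i) = F O (w i)) ->
  a <= x <= b -> 0 <= node_poly w k x -> q x <= F O x.
Proof.
  intros Hh Hpos Hd Hw Hq Hqi Hx Hsign.
  destruct (classic (exists i, (i < k)%nat /\ w i = x)) as [[i [Hi <-]]|Hnode].
  - rewrite Hqi by exact Hi. lra.
  - destruct (interpolation_error a b k F w q x Hh Hpos Hd Hw Hq Hqi Hx) as [lam [Hl E]].
    { intros i Hi Ei. apply Hnode. exists i. auto. }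
    assert (0 <= lam * node_poly w k x) by (apply Rmult_le_pos; auto). lra.
Qed.

(** * Separating repeated nodes *)

Lemma separation (l : list R) :
  exists d, 0 < d /\ forall x y, In x l -> In y l -> x <> y -> d <= Rabs (x - y).
Proof.
  induction l as [|z l [d [Hd H]]]; [exists 1; split; [lra|intros x y []]|].
  assert (Hz : exists d1, 0 < d1 /\ forall y, In y l -> y <> z -> d1 <= Rabs (z - y)).
  { clear d Hd H. induction l as [|y0 l [d [Hd H]]]; [exists 1; split; [lra|intros y []]|].
    destruct (Req_dec y0 z) as [E|Ne].
    - exists d. split; auto. intros y [<-|Hy] Hne; [congruence|auto].
    - exists (Rmin d (Rabs (z - y0))).
      split; [apply Rmin_pos; auto; apply Rabs_pos_lt; lra|].
      intros y [<-|Hy] Hne; [apply Rmin_r|].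
      pose proof (Rmin_l d (Rabs (z - y0))). specialize (H y Hy Hne). lra. }
  destruct Hz as [d1 [Hd1 H1]].
  exists (Rmin d d1). split; [apply Rmin_pos; auto|].
  pose proof (Rmin_l d d1). pose proof (Rmin_r d d1).
  intros x y [<-|Hx] [<-|Hy] Hne.
  - congruence.
  - specialize (H1 y Hy (fun E => Hne (eq_sym E))). lra.
  - specialize (H1 x Hx Hne). rewrite Rabs_minus_sym in H1. lra.
  - specialize (H x y Hx Hy Hne). lra.
Qed.

(** Given node values [v 0, ..., v (k-1)] in [[a,b]] (possibly repeated),
    separated by at least [d] from each other and from [b], we move every
    repeated occurrence [i] of a value by the distinct amount [d / (4 + i)],
    upwards unless the value is [b]. *)
Section Perturbation.

Variables (a b d : R) (k : nat) (v : nat -> R).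

Hypothesis hd : 0 < d.
Hypothesis hab : d <= b - a.
Hypothesis hv : forall i, (i < k)%nat -> a <= v i <= b.
Hypothesis hsep : forall i j, (i < k)%nat -> (j < k)%nat -> v i <> v j -> d <= Rabs (v i - v j).
Hypothesis hsep_b : forall i, (i < k)%nat -> v i <> b -> d <= b - v i.

Definition repeated (i : nat) : Prop := exists j, (j < i)%nat /\ v j = v i.

Definition direction (i : nat) : R := if Rlt_dec (v i) b then 1 else -1.

Definition perturbation (i : nat) : R :=
  if excluded_middle_informative (repeated i) then direction i * (d / (4 + INR i)) else 0.

Definition nudged (i : nat) : R := v i + perturbation i.

Lemma first_occurrence i : exists j, (j <= i)%nat /\ v j = v i /\ ~ repeated j.
Proof.
  induction i as [i IH] using lt_wf_ind.
  destruct (classic (repeated i)) as [[j' [Hj' Ej']]|Nd].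
  - destruct (IH j' Hj') as [j [Hj [Ej Nj]]]. exists j. split; [lia|split; auto]. congruence.
  - exists i. auto.
Qed.

Lemma nudged_covers i : exists j, (j <= i)%nat /\ nudged j = v i.
Proof.
  destruct (first_occurrence i) as [j [Hj [Ej Nj]]]. exists j. split; auto.
  unfold nudged, perturbation. destruct excluded_middle_informative; [contradiction|lra].
Qed.

Lemma step_bounds i : 0 < d / (4 + INR i) <= d / 4.
Proof.
  pose proof (pos_INR i). split; [apply Rdiv_lt_0_compat; lra|].
  unfold Rdiv. apply Rmult_le_compat_l; [lra|]. apply Rinv_le_contravar; lra.
Qed.

Lemma direction_cases i : direction i = 1 \/ direction i = -1.
Proof. unfold direction. destruct Rlt_dec; auto. Qed.

Lemma perturbation_small i : Rabs (perturbation i) <= d / 4.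
Proof.
  unfold perturbation. destruct excluded_middle_informative; [|rewrite Rabs_R0; lra].
  pose proof (step_bounds i).
  destruct (direction_cases i) as [->| ->]; unfold Rabs; destruct Rcase_abs; lra.
Qed.

Lemma nudged_in i : (i < k)%nat -> a <= nudged i <= b.
Proof.
  intros Hi. unfold nudged, perturbation.
  destruct excluded_middle_informative; [|rewrite Rplus_0_r; auto].
  pose proof (step_bounds i). specialize (hv i Hi). unfold direction.
  destruct Rlt_dec as [Hlt|Hge].
  - specialize (hsep_b i Hi ltac:(lra)). lra.
  - lra.
Qed.

Lemma nudged_distinct_lt i j : (i < k)%nat -> (j < k)%nat -> (i < j)%nat -> nudged i <> nudged j.
Proof.
  intros Hi Hj Hij E. unfold nudged in E.
  destruct (Req_dec (v i) (v j)) as [Evij|Nvij].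
  - assert (Rj : repeated j) by (exists i; auto).
    assert (Hdir : direction i = direction j) by (unfold direction; rewrite Evij; auto).
    assert (Hpe : perturbation i = perturbation j) by lra.
    unfold perturbation in Hpe.
    destruct (excluded_middle_informative (repeated j)) as [_|]; [|contradiction].
    pose proof (step_bounds i). pose proof (step_bounds j).
    destruct excluded_middle_informative.
    + (* equal shifts [d / (4 + i) = d / (4 + j)] force [i = j] *)
      rewrite Hdir in Hpe. apply Rmult_eq_reg_l in Hpe;
        [|destruct (direction_cases j) as [->| ->]; lra].
      assert (Hij' : INR i = INR j).
      { apply (Rmult_eq_compat_l (/ d)) in Hpe. unfold Rdiv in Hpe.
        rewrite <- !Rmult_assoc, Rinv_l, !Rmult_1_l in Hpe by lra.
        apply Rinv_eq_reg in Hpe. lra. }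
      apply INR_eq in Hij'. lia.
    + destruct (direction_cases j) as [Hd'|Hd']; rewrite Hd' in Hpe; lra.
  - specialize (hsep i j Hi Hj Nvij).
    pose proof (perturbation_small i). pose proof (perturbation_small j).
    revert hsep H H0. unfold Rabs; repeat destruct Rcase_abs; lra.
Qed.

Lemma nudged_distinct i j : (i < k)%nat -> (j < k)%nat -> i <> j -> nudged i <> nudged j.
Proof.
  intros Hi Hj Hij. destruct (Nat.lt_gt_cases i j) as [[Hlt|Hgt] _]; [exact Hij| |].
  - apply nudged_distinct_lt; auto.
  - intros E. apply (nudged_distinct_lt j i); auto.
Qed.

Lemma nudged_sign x :
  (forall i, (i < k)%nat -> x <> v i -> d <= Rabs (x - v i)) ->
  0 <= node_poly v k x -> 0 <= node_poly nudged k x.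
Proof.
  intros Hx Hsign.
  destruct (classic (exists i, (i < k)%nat /\ v i = x)) as [[i [Hi <-]]|Nex].
  - destruct (nudged_covers i) as [j [Hj Ej]].
    rewrite <- Ej, node_poly_root by lia. lra.
  - assert (0 < node_poly nudged k x * node_poly v k x); [|nra].
    apply node_poly_same_sign. intros i Hi.
    assert (Ne : x <> v i) by (intros E; apply Nex; exists i; auto).
    specialize (Hx i Hi Ne). pose proof (perturbation_small i).
    unfold nudged. revert Hx H. unfold Rabs; repeat destruct Rcase_abs; nra.
Qed.

End Perturbation.

Lemma configuration_separation a b k (u v : nat -> R) : a < b ->
  exists d, 0 < d /\ d <= b - a /\
    (forall i j, (i < k)%nat -> (j < k)%nat -> v i <> v j -> d <= Rabs (v i - v j)) /\
    (forall i, (i < k)%nat -> v i <> b -> d <= Rabs (b - v i)) /\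
    (forall l j, (l < k)%nat -> (j < k)%nat -> u l <> v j -> d <= Rabs (u l - v j)).
Proof.
  intros Hab.
  set (pts := a :: b :: map u (seq 0 k) ++ map v (seq 0 k)).
  destruct (separation pts) as [d0 [Hd0 Hsep]].
  assert (Hb : In b pts) by (right; left; auto).
  assert (Hu : forall i, (i < k)%nat -> In (u i) pts).
  { intros i Hi. right; right. apply in_or_app. left. apply in_map, in_seq. lia. }
  assert (Hv : forall i, (i < k)%nat -> In (v i) pts).
  { intros i Hi. right; right. apply in_or_app. right. apply in_map, in_seq. lia. }
  exists (Rmin d0 (b - a)).
  pose proof (Rmin_l d0 (b - a)). pose proof (Rmin_r d0 (b - a)).
  assert (Hd : forall x y, In x pts -> In y pts -> x <> y -> Rmin d0 (b - a) <= Rabs (x - y))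
    by (intros x y Hx Hy Hne; specialize (Hsep x y Hx Hy Hne); lra).
  split; [apply Rmin_pos; lra|]. split; [lra|].
  split; [|split]; intros; apply Hd; auto.
Qed.

(** Interpolate [f] by a polynomial [q] of degree [< k] at the values of [v]
    (made distinct by a small perturbation [w]): [q] has equal sums over [u]
    and [v], agrees with [f] on [v], and lies below [f] at each [u l]. *)
Theorem majorization a b k (u v : nat -> R) (f : R -> R) :
  (forall i, (i < k)%nat -> a <= u i <= b) ->
  (forall i, (i < k)%nat -> a <= v i <= b) ->
  (forall m, (1 <= m)%nat -> (m < k)%nat -> psum u k m = psum v k m) ->
  (forall l, (l < k)%nat -> 0 <= node_poly v k (u l)) ->
  kdiff_nonneg a b k f ->
  rsum k (fun i => f (u i)) >= rsum k (fun i => f (v i)).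
Proof.
  intros hu hv hpow hsign [F [<- [Hh Hpos]]].
  destruct (Rle_lt_dec b a) as [Hba|Hab].
  { (* degenerate interval: all the points coincide *)
    right. apply rsum_ext. intros i Hi. specialize (hu i Hi). specialize (hv i Hi).
    f_equal. lra. }
  destruct (configuration_separation a b k u v Hab) as [d [Hd [Hdab [Hvv [Hvb Huv]]]]].
  set (w := nudged b d v).
  assert (Hw : forall i, (i < k)%nat -> a <= w i <= b).
  { apply (nudged_in a b d k v); auto. intros i Hi Hne. specialize (Hvb i Hi Hne). pose proof (hv i Hi).
    revert Hvb. unfold Rabs; destruct Rcase_abs; lra. }
  destruct (interpolation w (F O) k (nudged_distinct b d k v Hd Hvv)) as [q [Hq Hqi]].
  assert (Hv_eq : forall i, (i < k)%nat -> F O (v i) = q (v i)).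
  { intros i Hi. destruct (nudged_covers b d v i) as [j [Hj <-]]. rewrite Hqi by lia. auto. }
  assert (Hu_ge : forall i, (i < k)%nat -> q (u i) <= F O (u i)).
  { intros i Hi.
    apply (interpolant_below a b k F w q); auto; [exact (nudged_distinct b d k v Hd Hvv)|].
    apply (nudged_sign b d k v Hd); auto. }
  rewrite (rsum_ext k (fun i => F O (v i)) (fun i => q (v i))) by exact Hv_eq.
  rewrite <- (poly_sum_eq u v k q hpow Hq).
  assert (H : 0 <= rsum k (fun i => F O (u i) - q (u i)))
    by (apply rsum_nonneg; intros i Hi; specialize (Hu_ge i Hi); lra).
  rewrite rsum_sub in H. lra.
Qed.

Lemma maxR_ge u n i : (i <= n)%nat -> u i <= maxR u n.
Proof.
  induction n; intros H; simpl.
  - replace i with O by lia. lra.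
  - destruct (Nat.eq_dec i (S n)) as [->|Ne]; [apply Rmax_r|].
    eapply Rle_trans; [apply IHn; lia|apply Rmax_l].
Qed.

Lemma maxR_attained u n : exists i, (i <= n)%nat /\ maxR u n = u i.
Proof.
  induction n as [|n [i [Hi E]]]; simpl; [exists O; auto|].
  unfold Rmax. destruct Rle_dec; [exists (S n)|exists i]; auto.
Qed.

(** When the node polynomials of [u] and [v] differ by the constant [c],
    [max u >= max v] iff [c >= 0]: evaluate the difference at the larger maximum. *)
Lemma max_ge_iff (u v : nat -> R) k c : (1 <= k)%nat ->
  (forall x, node_poly v k x - node_poly u k x = c) ->
  maxR u (k - 1) >= maxR v (k - 1) <-> 0 <= c.
Proof.
  intros Hk Hdiff.
  destruct (maxR_attained u (k - 1)) as [iu [Hiu Eu]].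
  destruct (maxR_attained v (k - 1)) as [iv [Hiv Ev]].
  split; intros H.
  - rewrite <- (Hdiff (u iu)), (node_poly_root u) by lia. rewrite Rminus_0_r.
    apply node_poly_nonneg. intros i Hi.
    pose proof (maxR_ge v (k - 1) i ltac:(lia)). lra.
  - apply Rnot_lt_ge. intros Hlt.
    assert (0 < node_poly u k (v iv)).
    { apply node_poly_pos. intros i Hi. pose proof (maxR_ge u (k - 1) i ltac:(lia)). lra. }
    pose proof (Hdiff (v iv)). rewrite (node_poly_root v) in * by lia. lra.
Qed.

Lemma pow_kdiff_nonneg a b k : kdiff_nonneg a b k (fun x => x ^ k).
Proof.
  destruct (poly_higher_derivs a b k _ _ (is_poly_pow k)) as [D [D0 [Dd Dk]]].
  exists D. repeat split; auto.
  intros x _. rewrite Dk, Rmult_1_r. apply pos_INR.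
Qed.

Theorem mainTheorem6 (k : nat) (a b : R) (u v : nat -> R)
  (hk : (1 <= k)%nat)
  (hu : forall i, (i < k)%nat -> a <= u i <= b)
  (hv : forall i, (i < k)%nat -> a <= v i <= b)
  (hpow : forall j : nat, (1 <= j)%nat -> (j < k)%nat ->
     sumk k (fun i => u i ^ j) = sumk k (fun i => v i ^ j)) :
  (sumk k (fun i => u i ^ k) >= sumk k (fun i => v i ^ k) <->
   maxR u (k - 1) >= maxR v (k - 1)) /\
  (maxR u (k - 1) >= maxR v (k - 1) <->
   (forall f : R -> R, kdiff_nonneg a b k f ->
      sumk k (fun i => f (u i)) >= sumk k (fun i => f (v i)))).
Proof.
  assert (hp : forall m, (1 <= m)%nat -> (m < k)%nat -> psum u k m = psum v k m)
    by (intros; unfold psum; rewrite <- !sumk_rsum; auto).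
  (* each of the three conditions is equivalent to [node_gap u v k >= 0] *)
  assert (E1 : sumk k (fun i => u i ^ k) >= sumk k (fun i => v i ^ k) <-> 0 <= node_gap u v k)
    by (rewrite !sumk_rsum by exact hk; exact (psum_top_ge_iff u v k hp hk)).
  assert (E2 : maxR u (k - 1) >= maxR v (k - 1) <-> 0 <= node_gap u v k)
    by (apply max_ge_iff, node_poly_diff; auto).
  assert (E3 : 0 <= node_gap u v k -> forall f, kdiff_nonneg a b k f ->
                 sumk k (fun i => f (u i)) >= sumk k (fun i => f (v i))).
  { intros Hc f Hf. rewrite !sumk_rsum by exact hk. apply (majorization a b); auto.
    intros l Hl. pose proof (node_poly_diff u v k hp (u l)) as Hd.
    rewrite node_poly_root in Hd by exact Hl. lra. }
  split; [rewrite E1, E2; tauto|].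
  split; [intros H; apply E3, E2, H|].
  intros H. apply E2, E1, (H (fun x => x ^ k)), pow_kdiff_nonneg.
Qed.
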